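(* There exist a finitary weakly cartesian monad $T$ on $\mathsf{Set}$ and a $T$-algebra $(A,e)$ such that the bar construction $X=\mathrm{Bar}(T,A)$ contains an inner $2$-horn with two different fillers whose remaining $1$-faces are also different: there are $x,y\in X_1$ with $d_0x=d_1y$ and $z,z'\in X_2$ with $d_2z=d_2z'=x$, $d_0z=d_0z'=y$, and $d_1z\neq d_1z'$.
   Context: A monad $(T,\eta,\mu)$ on $\mathsf{Set}$ is weakly cartesian if $T$ preserves weak pullbacks and every naturality square of $\eta$ and of $\mu$ is a weak pullback (a commutative square of sets with $f:A\to B$, $g:A\to C$, $m:B\to D$, $n:C\to D$ is a weak pullback if for all $b,c$ with $m(b)=n(c)$ there is $a$ with $f(a)=b$, $g(a)=c$). The bar construction of a $T$-algebra $(A,e)$ is the simplicial set $X=\mathrm{Bar}(T,A)$ with $X_n=T^{n+1}A$, face maps $d_{n,0}=T^ne:T^{n+1}A\to T^nA$ and $d_{n,i}=T^{n-i}\mu_{T^{i-1}A}:T^{n+1}A\to T^nA$ for $1\le i\le n$, and degeneracy maps $s_{n,i}=T^{n-i+1}\eta_{T^iA}:T^{n+1}A\to T^{n+2}A$ for $0\le i\le n$. *)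

Record Monad := {
  T : Type -> Type;
  fmap : forall (A B : Type), (A -> B) -> T A -> T B;
  eta : forall (A : Type), A -> T A;
  mu : forall (A : Type), T (T A) -> T A;
  fmap_id : forall (A : Type) (t : T A), fmap A A (fun a => a) t = t;
  fmap_comp : forall (A B C : Type) (f : A -> B) (g : B -> C) (t : T A),
      fmap A C (fun a => g (f a)) t = fmap B C g (fmap A B f t);
  eta_nat : forall (A B : Type) (f : A -> B) (a : A),
      fmap A B f (eta A a) = eta B (f a);
  mu_nat : forall (A B : Type) (f : A -> B) (t : T (T A)),
      fmap A B f (mu A t) = mu B (fmap (T A) (T B) (fmap A B f) t);
  mu_eta_l : forall (A : Type) (t : T A), mu A (eta (T A) t) = t;
  mu_eta_r : forall (A : Type) (t : T A), mu A (fmap A (T A) (eta A) t) = t;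
  mu_assoc : forall (A : Type) (t : T (T (T A))),
      mu A (mu (T A) t) = mu A (fmap (T (T A)) (T A) (mu A) t)
}.

Arguments fmap _ {A B} _ _.
Arguments eta _ {A} _.
Arguments mu _ {A} _.

Definition weak_pullback {A B C D : Type}
  (f : A -> B) (g : A -> C) (m : B -> D) (n : C -> D) : Prop :=
  (forall a, m (f a) = n (g a)) /\
  (forall b c, m b = n c -> exists a, f a = b /\ g a = c).

Definition preserves_weak_pullbacks (M : Monad) : Prop :=
  forall (A B C D : Type) (f : A -> B) (g : A -> C) (m : B -> D) (n : C -> D),
    weak_pullback f g m n ->
    weak_pullback (fmap M f) (fmap M g) (fmap M m) (fmap M n).

Definition weakly_cartesian (M : Monad) : Prop :=
  preserves_weak_pullbacks M /\
  (forall (A B : Type) (f : A -> B),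
      weak_pullback f (@eta M A) (@eta M B) (fmap M f)) /\
  (forall (A B : Type) (f : A -> B),
      weak_pullback (fmap M (fmap M f)) (@mu M A) (@mu M B) (fmap M f)).

(** Finitary (preserves filtered colimits).  For Set-functors this is the
    standard (Adamek--Trnkova) condition: every element of T A lies in the
    image of T f for some map f from a finite set {0,...,n-1} into A. *)
Definition finitary (M : Monad) : Prop :=
  forall (A : Type) (t : T M A),
    exists (n : nat) (f : {i : nat | i < n} -> A) (s : T M {i : nat | i < n}),
      fmap M f s = t.

Definition is_algebra (M : Monad) (A : Type) (e : T M A -> A) : Prop :=
  (forall a : A, e (eta M a) = a) /\
  (forall t : T M (T M A), e (mu M t) = e (fmap M e t)).

Section Bar.
Variables (M : Monad) (A : Type) (e : T M A -> A).
Definition bar_d10 (x : T M (T M A)) : T M A := fmap M e x.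
Definition bar_d11 (x : T M (T M A)) : T M A := mu M x.
Definition bar_d20 (z : T M (T M (T M A))) : T M (T M A) := fmap M (fmap M e) z.
Definition bar_d21 (z : T M (T M (T M A))) : T M (T M A) := fmap M (@mu M A) z.
Definition bar_d22 (z : T M (T M (T M A))) : T M (T M A) := mu M z.
End Bar.

(* Take for T the finite-multiset (bag) monad, which is finitary and weakly
   cartesian, and for A the terminal algebra 1.  Then T 1 is N with mu given
   by addition, so X_1 = T^2 1 consists of finite multisets of naturals.  Over
   x = {1,1,2,2} and y = {2,2} the horn has the fillers z = {{1,1},{2,2}} and
   z' = {{1,2},{1,2}}, whose 1-faces {2,4} and {3,3} differ. *)

From Stdlib Require Import List Permutation Lia.
From Stdlib Require Import ClassicalEpsilon FunctionalExtensionality PropExtensionality ProofIrrelevance.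
Import ListNotations.

Lemma Permutation_concat {A : Type} (L L' : list (list A)) :
  Permutation L L' -> Permutation (concat L) (concat L').
Proof.
  intros HL. rewrite <- (map_id L), <- (map_id L'), <- !flat_map_concat_map.
  now apply Permutation_flat_map.
Qed.

Lemma Permutation_concat_map {A B : Type} (g h : A -> list B) (l : list A) :
  (forall a, Permutation (g a) (h a)) ->
  Permutation (concat (map g l)) (concat (map h l)).
Proof. intros Hgh. induction l as [|a l IH]; simpl; auto using Permutation_app. Qed.

Lemma concat_map_singleton {A : Type} (l : list A) : concat (map (fun a => [a]) l) = l.
Proof. induction l as [|a l IH]; simpl; congruence. Qed.

Lemma concat_concat {A : Type} (lss : list (list (list A))) :
  concat (concat lss) = concat (map (@concat A) lss).
Proof. induction lss as [|ls lss IH]; simpl; auto. now rewrite concat_app, IH. Qed.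

Lemma map_eq_concat {A B : Type} (f : A -> B) (la : list A) (ls : list (list B)) :
  map f la = concat ls -> exists lsa, map (map f) lsa = ls /\ concat lsa = la.
Proof.
  revert la. induction ls as [|l ls IH]; intros la H.
  - exists []. destruct la; [auto|discriminate].
  - simpl in H. apply map_eq_app in H. destruct H as [l1 [l2 [-> [H1 H2]]]].
    destruct (IH _ H2) as [lsa [E1 E2]]. exists (l1 :: lsa). simpl. subst. auto.
Qed.

Lemma Permutation_weak_pullback {A B C D : Type}
  (f : A -> B) (g : A -> C) (m : B -> D) (n : C -> D) :
  weak_pullback f g m n -> forall lb lc, Permutation (map m lb) (map n lc) ->
  exists la, Permutation (map f la) lb /\ Permutation (map g la) lc.
Proof.
  intros [_ Hw] lb. induction lb as [|b lb IH]; intros lc Hp.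
  - apply Permutation_nil, map_eq_nil in Hp as ->. now exists [].
  - assert (Hin : In (m b) (map n lc)) by (eapply Permutation_in; [exact Hp | now left]).
    apply in_map_iff in Hin as [c [Hc Hinc]].
    apply in_split in Hinc as [l1 [l2 ->]].
    rewrite map_app in Hp. simpl in Hp. rewrite <- Hc in Hp.
    apply Permutation_cons_app_inv in Hp. rewrite <- map_app in Hp.
    destruct (IH _ Hp) as [la [H1 H2]].
    destruct (Hw b c (eq_sym Hc)) as [a [<- <-]].
    exists (a :: la). split; simpl; auto using Permutation_cons_app.
Qed.

Lemma list_factors_through_fin {A : Type} (l : list A) :
  exists (n : nat) (f : {i : nat | i < n} -> A) (s : list {i : nat | i < n}),
    map f s = l.
Proof.
  induction l as [|a l IH].
  - exists 0, (fun i => match PeanoNat.Nat.nlt_0_r _ (proj2_sig i) with end), [].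
    reflexivity.
  - destruct IH as [n [f [s Hs]]].
    set (f' := fun i : {i : nat | i < S n} =>
      match Compare_dec.lt_dec (proj1_sig i) n with
      | left h => f (exist _ (proj1_sig i) h)
      | right _ => a
      end).
    set (widen := fun i : {i : nat | i < n} =>
      exist (fun j => j < S n) (proj1_sig i) (PeanoNat.Nat.lt_lt_succ_r _ _ (proj2_sig i))).
    exists (S n), f', (exist _ n (PeanoNat.Nat.lt_succ_diag_r n) :: map widen s).
    simpl. f_equal.
    + unfold f'. simpl. destruct Compare_dec.lt_dec; [lia | reflexivity].
    + rewrite <- Hs, map_map. apply map_ext. intros [i h]. unfold f', widen. simpl.
      destruct Compare_dec.lt_dec as [h'|]; [|lia].
      now rewrite (proof_irrelevance _ h' h).
Qed.

(* A bag is stored as its Permutation-class, so that equal bags are equal in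
   Rocq; [elems] chooses a representative list. *)
Definition bag (A : Type) : Type := { P : list A -> Prop | exists l, P = Permutation l }.

Definition bag_of {A : Type} (l : list A) : bag A :=
  exist _ (Permutation l) (ex_intro _ l eq_refl).

Lemma bag_of_eq {A : Type} (l l' : list A) : bag_of l = bag_of l' <-> Permutation l l'.
Proof.
  split.
  - intros H. apply (f_equal (@proj1_sig _ _)) in H. simpl in H.
    rewrite H. apply Permutation_refl.
  - intros H. apply eq_sig_hprop; [intros; apply proof_irrelevance|]. simpl.
    apply functional_extensionality. intros l''.
    apply propositional_extensionality.
    split; intros; eauto using Permutation_trans, Permutation_sym.
Qed.

Lemma bag_of_surj {A : Type} (b : bag A) : exists l, b = bag_of l.
Proof.
  destruct b as [P [l ->]]. exists l.
  now apply eq_sig_hprop; [intros; apply proof_irrelevance|].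
Qed.

Lemma bag_ind {A : Type} (P : bag A -> Prop) :
  (forall l, P (bag_of l)) -> forall b, P b.
Proof. intros HP b. now destruct (bag_of_surj b) as [l ->]. Qed.

Definition elems {A : Type} (b : bag A) : list A :=
  proj1_sig (constructive_indefinite_description _ (bag_of_surj b)).

Lemma bag_of_elems {A : Type} (b : bag A) : bag_of (elems b) = b.
Proof. unfold elems. now destruct constructive_indefinite_description. Qed.

Lemma elems_bag_of {A : Type} (l : list A) : Permutation (elems (bag_of l)) l.
Proof. apply bag_of_eq, bag_of_elems. Qed.

Lemma bag2_ind {A : Type} (P : bag (bag A) -> Prop) :
  (forall ls, P (bag_of (map bag_of ls))) -> forall B, P B.
Proof.
  intros HP. apply bag_ind. intros L.
  replace L with (map bag_of (map elems L)); [apply HP|].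
  rewrite map_map, <- map_id. apply map_ext, bag_of_elems.
Qed.

Lemma bag3_ind {A : Type} (P : bag (bag (bag A)) -> Prop) :
  (forall lss, P (bag_of (map bag_of (map (map bag_of) lss)))) -> forall t, P t.
Proof.
  intros HP. apply bag2_ind. intros ls.
  replace ls with (map (map bag_of) (map (map elems) ls)); [apply HP|].
  rewrite map_map, <- map_id. apply map_ext. intros l.
  rewrite map_map, <- map_id. apply map_ext, bag_of_elems.
Qed.

Definition bag_map {A B : Type} (f : A -> B) (b : bag A) : bag B :=
  bag_of (map f (elems b)).

Definition bag_ret {A : Type} (a : A) : bag A := bag_of [a].

Definition bag_join {A : Type} (B : bag (bag A)) : bag A :=
  bag_of (concat (map elems (elems B))).

Lemma bag_map_of {A B : Type} (f : A -> B) (l : list A) :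
  bag_map f (bag_of l) = bag_of (map f l).
Proof. apply bag_of_eq, Permutation_map, elems_bag_of. Qed.

Lemma map_bag_map_of {A B : Type} (f : A -> B) (ls : list (list A)) :
  map (bag_map f) (map bag_of ls) = map bag_of (map (map f) ls).
Proof. rewrite !map_map. apply map_ext, bag_map_of. Qed.

Lemma bag_join_of {A : Type} (ls : list (list A)) :
  bag_join (bag_of (map bag_of ls)) = bag_of (concat ls).
Proof.
  apply bag_of_eq. unfold bag_join.
  transitivity (concat (map elems (map bag_of ls))).
  - apply Permutation_concat, Permutation_map, elems_bag_of.
  - rewrite map_map. rewrite <- (map_id ls) at 2.
    apply Permutation_concat_map, elems_bag_of.
Qed.

Lemma bag_map_id {A : Type} (b : bag A) : bag_map (fun a => a) b = b.
Proof. induction b as [l] using bag_ind. now rewrite bag_map_of, map_id. Qed.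

Lemma bag_map_comp {A B C : Type} (f : A -> B) (g : B -> C) (b : bag A) :
  bag_map (fun a => g (f a)) b = bag_map g (bag_map f b).
Proof. induction b as [l] using bag_ind. now rewrite !bag_map_of, map_map. Qed.

Lemma bag_map_ret {A B : Type} (f : A -> B) (a : A) :
  bag_map f (bag_ret a) = bag_ret (f a).
Proof. exact (bag_map_of f [a]). Qed.

Lemma bag_map_join {A B : Type} (f : A -> B) (B' : bag (bag A)) :
  bag_map f (bag_join B') = bag_join (bag_map (bag_map f) B').
Proof.
  induction B' as [ls] using bag2_ind.
  now rewrite bag_join_of, !bag_map_of, map_bag_map_of, bag_join_of, concat_map.
Qed.

Lemma bag_join_ret {A : Type} (b : bag A) : bag_join (bag_ret b) = b.
Proof.
  induction b as [l] using bag_ind.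
  change (bag_ret (bag_of l)) with (bag_of (map bag_of [l])).
  now rewrite bag_join_of, concat_cons, app_nil_r.
Qed.

Lemma bag_join_map_ret {A : Type} (b : bag A) : bag_join (bag_map bag_ret b) = b.
Proof.
  induction b as [l] using bag_ind.
  rewrite bag_map_of.
  replace (map bag_ret l) with (map bag_of (map (fun a => [a]) l)) by apply map_map.
  now rewrite bag_join_of, concat_map_singleton.
Qed.

Lemma bag_join_assoc {A : Type} (t : bag (bag (bag A))) :
  bag_join (bag_join t) = bag_join (bag_map bag_join t).
Proof.
  induction t as [lss] using bag3_ind.
  rewrite bag_join_of, <- concat_map, bag_join_of, bag_map_of, map_map.
  replace (map (fun ls => bag_join (bag_of ls)) (map (map bag_of) lss))
    with (map bag_of (map (@concat A) lss)).
  - now rewrite bag_join_of, concat_concat.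
  - rewrite !map_map. apply map_ext. intros ls. now rewrite bag_join_of.
Qed.

Definition bag_monad : Monad :=
  {| T := bag; fmap := @bag_map; eta := @bag_ret; mu := @bag_join;
     fmap_id := @bag_map_id; fmap_comp := @bag_map_comp;
     eta_nat := @bag_map_ret; mu_nat := @bag_map_join;
     mu_eta_l := @bag_join_ret; mu_eta_r := @bag_join_map_ret;
     mu_assoc := @bag_join_assoc |}.

Lemma bag_monad_finitary : finitary bag_monad.
Proof.
  intros A b. induction b as [l] using bag_ind.
  destruct (list_factors_through_fin l) as [n [f [s Hs]]].
  exists n, f, (bag_of s). simpl. now rewrite bag_map_of, Hs.
Qed.

Lemma bag_map_weak_pullback {A B C D : Type}
  (f : A -> B) (g : A -> C) (m : B -> D) (n : C -> D) :
  weak_pullback f g m n ->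
  weak_pullback (bag_map f) (bag_map g) (bag_map m) (bag_map n).
Proof.
  intros Hw. split.
  - intros a. rewrite <- !bag_map_comp. f_equal.
    apply functional_extensionality, (proj1 Hw).
  - intros b c. induction b as [lb] using bag_ind. induction c as [lc] using bag_ind.
    rewrite !bag_map_of, bag_of_eq. intros Hp.
    destruct (Permutation_weak_pullback f g m n Hw lb lc Hp) as [la [Hf Hg]].
    exists (bag_of la). now rewrite !bag_map_of, !bag_of_eq.
Qed.

Lemma bag_ret_weak_pullback {A B : Type} (f : A -> B) :
  weak_pullback f bag_ret bag_ret (bag_map f).
Proof.
  split.
  - intros a. now rewrite bag_map_ret.
  - intros b c. induction c as [l] using bag_ind.
    unfold bag_ret. rewrite bag_map_of, bag_of_eq. intros Hp.
    apply Permutation_length_1_inv in Hp.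
    destruct l as [|a [|]]; try discriminate. injection Hp as <-.
    now exists a.
Qed.

Lemma bag_join_weak_pullback {A B : Type} (f : A -> B) :
  weak_pullback (bag_map (bag_map f)) bag_join bag_join (bag_map f).
Proof.
  split.
  - intros B'. symmetry. apply bag_map_join.
  - intros B' c. induction B' as [ls] using bag2_ind. induction c as [la] using bag_ind.
    rewrite bag_join_of, bag_map_of, bag_of_eq. intros Hp.
    destruct (Permutation_map_inv f la Hp) as [la' [Hla' Hperm]].
    destruct (map_eq_concat f la' ls (eq_sym Hla')) as [lsa [<- Hcat]].
    exists (bag_of (map bag_of lsa)).
    rewrite bag_map_of, map_bag_map_of, bag_join_of, Hcat.
    split; [reflexivity | apply bag_of_eq, Permutation_sym, Hperm].
Qed.

Lemma bag_monad_weakly_cartesian : weakly_cartesian bag_monad.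
Proof.
  split; [|split].
  - exact @bag_map_weak_pullback.
  - exact @bag_ret_weak_pullback.
  - exact @bag_join_weak_pullback.
Qed.

Lemma unit_is_algebra (M : Monad) : is_algebra M unit (fun _ => tt).
Proof. split; [intros []|]; reflexivity. Qed.

Definition units (n : nat) : bag unit := bag_of (repeat tt n).

(* Via [units], [bag unit] is the natural numbers and [bag (bag unit)] the
   finite multisets of naturals. *)
Definition nat_bag (ns : list nat) : bag (bag unit) := bag_of (map units ns).

Lemma length_elems_units (n : nat) : length (elems (units n)) = n.
Proof. unfold units. now rewrite (Permutation_length (elems_bag_of _)), repeat_length. Qed.

Lemma nat_bag_eq (ns ms : list nat) : nat_bag ns = nat_bag ms <-> Permutation ns ms.
Proof.
  unfold nat_bag. rewrite bag_of_eq. split.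
  - intros Hp. apply (Permutation_map (fun b => length (elems b))) in Hp.
    rewrite !map_map in Hp. setoid_rewrite length_elems_units in Hp.
    now rewrite !map_id in Hp.
  - apply Permutation_map.
Qed.

Lemma bag_map_to_unit {X : Type} (l : list X) :
  bag_map (fun _ => tt) (bag_of l) = units (length l).
Proof. now rewrite bag_map_of, map_const. Qed.

Lemma bag_map_to_unit_nat_bag (ns : list nat) :
  bag_map (fun _ => tt) (nat_bag ns) = units (length ns).
Proof. unfold nat_bag. now rewrite bag_map_to_unit, length_map. Qed.

Lemma bag_join_nat_bag (ns : list nat) : bag_join (nat_bag ns) = units (list_sum ns).
Proof.
  unfold nat_bag, units. rewrite <- map_map, bag_join_of. f_equal.
  induction ns as [|n ns IH]; simpl; [reflexivity|].
  now rewrite repeat_app, IH.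
Qed.

Lemma bag_join_nat_bags (nss : list (list nat)) :
  bag_join (bag_of (map nat_bag nss)) = nat_bag (concat nss).
Proof.
  unfold nat_bag. rewrite <- map_map, bag_join_of. now rewrite concat_map.
Qed.

Lemma bag_map_to_unit_nat_bags (nss : list (list nat)) :
  bag_map (bag_map (fun _ => tt)) (bag_of (map nat_bag nss)) =
  nat_bag (map (@length nat) nss).
Proof.
  rewrite bag_map_of, map_map. unfold nat_bag at 2. rewrite map_map. f_equal.
  apply map_ext, bag_map_to_unit_nat_bag.
Qed.

Lemma bag_map_join_nat_bags (nss : list (list nat)) :
  bag_map bag_join (bag_of (map nat_bag nss)) = nat_bag (map list_sum nss).
Proof.
  rewrite bag_map_of, map_map. unfold nat_bag at 2. rewrite map_map. f_equal.
  apply map_ext, bag_join_nat_bag.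
Qed.

Theorem theorem4p6 :
  exists M : Monad, finitary M /\ weakly_cartesian M /\
    exists (A : Type) (e : T M A -> A), is_algebra M A e /\
      exists (x y : T M (T M A)) (z z' : T M (T M (T M A))),
        bar_d10 M A e x = bar_d11 M A y /\
        bar_d22 M A z = x /\ bar_d22 M A z' = x /\
        bar_d20 M A e z = y /\ bar_d20 M A e z' = y /\
        bar_d21 M A z <> bar_d21 M A z'.
Proof.
  exists bag_monad. split; [exact bag_monad_finitary|].
  split; [exact bag_monad_weakly_cartesian|].
  exists unit, (fun _ => tt). split; [apply unit_is_algebra|].
  exists (nat_bag [1; 1; 2; 2]), (nat_bag [2; 2]),
    (bag_of (map nat_bag [[1; 1]; [2; 2]])), (bag_of (map nat_bag [[1; 2]; [1; 2]])).
  cbn [bar_d10 bar_d11 bar_d20 bar_d21 bar_d22 fmap mu bag_monad].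
  rewrite bag_map_to_unit_nat_bag, bag_join_nat_bag, !bag_join_nat_bags,
    !bag_map_to_unit_nat_bags, !bag_map_join_nat_bags.
  cbn [length list_sum concat map app Nat.add]. repeat split.
  - apply nat_bag_eq. constructor. apply perm_swap.
  - rewrite nat_bag_eq. intros Hp.
    apply (Permutation_in 2) in Hp as [H | [H | []]]; [discriminate.. | now left].
Qed.
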